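(* Let $n\le d$, let $V=\operatorname{span}\{|ii\rangle: i\in[n]\}\subseteq\mathbb{C}^d\otimes\mathbb{C}^d$, let $\phi=\sum_{i=1}^n\phi_i|ii\rangle\in V$, and let $K=\sum_{i=1}^n|e_i\rangle\langle ii|$, where $\{e_i\}$ is the standard basis of $\mathbb{C}^n$. If $\rho\in\mathcal{F}_{\phi}$ is separable, then $Z^\Gamma_K(\rho)=K\rho^\Gamma K^*\in\operatorname{R}_1[\mathcal{M}_n^+[x]]$, where $x=(|\phi_1|^2,\dots,|\phi_n|^2)$.
   Context: $|ij\rangle=|i\rangle\otimes|j\rangle$ in the standard basis; $\rho^\Gamma$ is the partial transpose on the second factor. A bipartite PSD $\rho$ is separable if it is a finite sum $\sum_k|v_k\rangle\langle v_k|\otimes|w_k\rangle\langle w_k|$. With $P_V$ the orthogonal projection onto $V$, $\mathcal{F}_\phi=\{\rho\in(\mathcal{M}_d\otimes\mathcal{M}_d)^+ : P_V\rho P_V=\lambda|\phi\rangle\langle\phi| \text{ for some } \lambda\ge0\}$. For $x\in\mathbb{R}^n_+$, $\mathcal{M}_n^+[x]$ is the cone of $n\times n$ complex PSD matrices $X$ for which there exists $\lambda$ with $X_{ii}=\lambda x_i$ for all $i$. For a cone $\mathcal{C}\subseteq\mathcal{M}_n^+$, $\operatorname{R}_1[\mathcal{C}]$ is the convex cone generated by its rank-1 elements. *)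

(* Complex numbers: an arbitrary numClosedFieldType C
   (e.g. algC, or R[i] for R : rcfType). *)
From HB Require Import structures.
From mathcomp Require Import all_boot all_order all_algebra.
From mathcomp Require Import spectral.
From mathcomp.real_closed Require Import mxtens.
Set Implicit Arguments. Unset Strict Implicit. Unset Printing Implicit Defensive.
Import Order.TTheory GRing.Theory Num.Theory.
Local Open Scope ring_scope.
Local Open Scope sesquilinear_scope.

Section Defs.
Variable C : numClosedFieldType.

Definition adj m p (A : 'M[C]_(m, p)) : 'M[C]_(p, m) := A ^t*.

Definition psdmx m (A : 'M[C]_m) : Prop :=
  adj A = A /\ forall v : 'cV[C]_m, 0 <= (adj v *m A *m v) 0 0.

Definition ket d (i : 'I_d) : 'cV[C]_d := delta_mx i 0.

Definition ket2 d (i j : 'I_d) : 'cV[C]_(d * d) := ket i *t ket j.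

Definition separable d (rho : 'M[C]_(d * d)) : Prop :=
  exists s : seq ('cV[C]_d * 'cV[C]_d),
    rho = \sum_(vw <- s) ((vw.1 *m adj vw.1) *t (vw.2 *m adj vw.2)).

(* partial transpose on the second factor:
   rho^Gamma_{(i,j),(k,l)} = rho_{(i,l),(k,j)} *)
Definition ptrans d (rho : 'M[C]_(d * d)) : 'M[C]_(d * d) :=
  \matrix_(p, q)
    rho (mxtens_index ((mxtens_unindex p).1, (mxtens_unindex q).2))
        (mxtens_index ((mxtens_unindex q).1, (mxtens_unindex p).2)).

Variables (n d : nat) (hnd : (n <= d)%N).
Local Notation w i := (widen_ord hnd i).

Definition PV : 'M[C]_(d * d) :=
  \sum_(i < n) (ket2 (w i) (w i) *m adj (ket2 (w i) (w i))).

Definition phivec (phi : 'I_n -> C) : 'cV[C]_(d * d) :=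
  \sum_(i < n) phi i *: ket2 (w i) (w i).

Definition Fphi (phi : 'I_n -> C) (rho : 'M[C]_(d * d)) : Prop :=
  psdmx rho /\ exists lam : C, 0 <= lam /\
    PV *m rho *m PV = lam *: (phivec phi *m adj (phivec phi)).

Definition Kmx : 'M[C]_(n, d * d) :=
  \sum_(i < n) (ket i *m adj (ket2 (w i) (w i))).

Definition ZGammaK (rho : 'M[C]_(d * d)) : 'M[C]_n :=
  Kmx *m ptrans rho *m adj Kmx.

End Defs.

Definition Mplus (C : numClosedFieldType) n (x : 'I_n -> C) (X : 'M[C]_n) : Prop :=
  psdmx X /\ exists lam : C, lam \is Num.real /\ forall i, X i i = lam * x i.

Definition R1 (C : numClosedFieldType) n (cone : 'M[C]_n -> Prop) (X : 'M[C]_n) : Prop :=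
  exists s : seq (C * 'M[C]_n),
    (forall cM, cM \in s -> 0 <= cM.1 /\ cone cM.2 /\ \rank cM.2 = 1%N) /\
    X = \sum_(cM <- s) cM.1 *: cM.2.

From HB Require Import structures.
From mathcomp Require Import all_boot all_order all_algebra.
From mathcomp Require Import spectral.
From mathcomp.real_closed Require Import mxtens.
From mathcomp Require Import ring.
Set Implicit Arguments. Unset Strict Implicit. Unset Printing Implicit Defensive.
Import Order.TTheory GRing.Theory Num.Theory.
Local Open Scope ring_scope.

(* Write rho = sum_t |v_t><v_t| (x) |w_t><w_t|.  On V the entries of rho are
   sum_t z_t(i) conj(z_t(j)) with z_t(i) = v_t(i) w_t(i), so the hypothesis
   P_V rho P_V = lam |phi><phi| forces every z_t to be a multiple of phi.
   Partial transposition conjugates the second factor: K rho^Gamma K^* is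
   sum_t u_t u_t^* with u_t(i) = v_t(i) conj(w_t(i)), and |u_t(i)| = |z_t(i)|,
   so every rank-one term u_t u_t^* has diagonal proportional to |phi_i|^2. *)

Lemma sum_natr_eq_mull (R : pzSemiRingType) (I : finType) (F : I -> R) i0 :
  \sum_i (i == i0)%:R * F i = F i0.
Proof.
rewrite (bigD1 i0) //= eqxx mul1r big1 ?addr0 // => i /negbTE ->.
by rewrite mul0r.
Qed.

Lemma mulmx_entry_delta (R : comPzSemiRingType) m1 m2 p1 p2
    (A : 'M[R]_(m1, p1)) (X : 'M[R]_(p1, p2)) (B : 'M[R]_(p2, m2)) i j k l :
  (forall k', A i k' = (k' == k)%:R) -> (forall l', B l' j = (l' == l)%:R) ->
  (A *m X *m B) i j = X k l.
Proof.
move=> Ai Bj; rewrite mxE.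
under eq_bigr => l' _ do rewrite Bj mxE mulrC.
under eq_bigr => l' _ do under eq_bigr => k' _ do rewrite Ai.
by under eq_bigr => l' _ do rewrite sum_natr_eq_mull; rewrite sum_natr_eq_mull.
Qed.

Lemma mxrank_col_mul_row (F : fieldType) m p (u : 'cV[F]_m) (v : 'rV[F]_p) :
  u *m v != 0 -> \rank (u *m v) = 1%N.
Proof.
move=> uv_neq0; apply/eqP; rewrite eqn_leq lt0n mxrank_eq0 uv_neq0 andbT.
exact: leq_trans (mxrankM_maxl _ _) (rank_leq_col _).
Qed.

Section Adjoint.
Variable C : numClosedFieldType.

Lemma adjE m p (A : 'M[C]_(m, p)) i j : adj A i j = (A j i)^*.
Proof. by rewrite !mxE. Qed.

Lemma adjK m p (A : 'M[C]_(m, p)) : adj (adj A) = A.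
Proof. exact: trmxCK. Qed.

Lemma adjM m p q (A : 'M[C]_(m, p)) (B : 'M[C]_(p, q)) :
  adj (A *m B) = adj B *m adj A.
Proof. by rewrite /adj trmx_mul map_mxM. Qed.

Lemma ketE m (a k : 'I_m) (z : 'I_1) : @ket C m a k z = (k == a)%:R.
Proof. by rewrite mxE ord1 eqxx andbT. Qed.

Lemma outerE m p (u : 'cV[C]_m) (v : 'cV[C]_p) i j :
  (u *m adj v) i j = u i 0 * (v j 0)^*.
Proof. by rewrite mxE big_ord1 adjE. Qed.

Lemma psdmx_outer m (u : 'cV[C]_m) : psdmx (u *m adj u).
Proof.
split; first by rewrite adjM adjK.
move=> v; rewrite !mulmxA -(mulmxA (adj v *m u)) -[adj u *m v]adjK adjM adjK.
by rewrite outerE mul_conjC_ge0.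
Qed.

Lemma sum_mul_conjC_eq0 (T : eqType) (s : seq T) (F : T -> C) :
  \sum_(t <- s) F t * (F t)^* = 0 -> forall t, t \in s -> F t = 0.
Proof.
move/eqP; rewrite psumr_eq0 => [/allP sF0 t /sF0|t _]; last exact: mul_conjC_ge0.
by rewrite mul_conjC_eq0 => /eqP.
Qed.

(* Expanding with the hypothesis, the squared moduli of the 2x2 minors
   z_t(i) phi_j - z_t(j) phi_i sum to zero, so each minor vanishes. *)
Lemma sum_outer_eq_outer_colinear (I : finType) (T : eqType) (s : seq T)
    (z : T -> I -> C) (phi : I -> C) (lam : C) :
  (forall i j, \sum_(t <- s) z t i * (z t j)^* = lam * phi i * (phi j)^*) ->
  forall t, t \in s -> exists c, forall i, z t i = c * phi i.
Proof.
move=> zz t ts.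
have minor0 i j : z t i * phi j = z t j * phi i.
  pose a u := z u i * phi j - z u j * phi i.
  suff /sum_mul_conjC_eq0/(_ t ts)/eqP : \sum_(u <- s) a u * (a u)^* = 0.
    by rewrite subr_eq0 => /eqP.
  have -> : \sum_(u <- s) a u * (a u)^* =
      (\sum_(u <- s) z u i * (z u i)^*) * (phi j * (phi j)^*)
    - (\sum_(u <- s) z u i * (z u j)^*) * (phi j * (phi i)^*)
    - (\sum_(u <- s) z u j * (z u i)^*) * (phi i * (phi j)^*)
    + (\sum_(u <- s) z u j * (z u j)^*) * (phi i * (phi i)^*).
    rewrite !mulr_suml -!sumrB -big_split /=; apply: eq_bigr => u _.
    by rewrite /a rmorphB !rmorphM /=; ring.
  by rewrite !zz; ring.
have [j0 /= phij0_neq0 | phi0] := pickP (fun j => phi j != 0).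
  by exists (z t j0 / phi j0) => i; rewrite mulrAC -minor0 mulfK.
exists 0 => i; rewrite mul0r.
apply: (@sum_mul_conjC_eq0 _ s (z^~ i)) ts.
by rewrite zz; move/negbFE/eqP: (phi0 i) => ->; rewrite mulr0 mul0r.
Qed.

Lemma Mplus_outer n (x : 'I_n -> C) (u : 'cV[C]_n) (lam : C) :
  lam \is Num.real -> (forall i, `|u i 0| ^+ 2 = lam * x i) ->
  Mplus x (u *m adj u).
Proof.
move=> lam_real ux; split; first exact: psdmx_outer.
by exists lam; split=> // i; rewrite outerE -normCK.
Qed.

Lemma R1_sum_outer n (cone : 'M[C]_n -> Prop) (T : eqType) (s : seq T)
    (u : T -> 'cV[C]_n) :
  (forall t, t \in s -> cone (u t *m adj (u t))) ->
  R1 cone (\sum_(t <- s) u t *m adj (u t)).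
Proof.
move=> cone_u; pose U t := u t *m adj (u t).
exists [seq (1, U t) | t <- s & U t != 0]; split.
  move=> cM /mapP[t]; rewrite mem_filter => /andP[Ut_neq0 ts] -> /=.
  by split=> //; split; [exact: cone_u | exact: mxrank_col_mul_row].
rewrite big_map big_filter (bigID (fun t => U t != 0)) /=.
rewrite [X in _ + X]big1 ?addr0 => [|t /negbNE/eqP //].
by apply: eq_bigr => t _; rewrite scale1r.
Qed.

End Adjoint.

Section Compression.
Variables (C : numClosedFieldType) (n d : nat) (hnd : (n <= d)%N).
Local Notation w i := (widen_ord hnd i).
Local Notation ii i := (mxtens_index (widen_ord hnd i, widen_ord hnd i)).

Lemma ket2E (a b : 'I_d) p : @ket2 C d a b p 0 = (p == mxtens_index (a, b))%:R.
Proof.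
case: (mxtens_indexP p) => i j; rewrite /ket2 mxE !ketE mxtens_indexK /=.
rewrite (inj_eq (can_inj (@mxtens_indexK _ _))) xpair_eqE.
by case: (i == a); case: (j == b); rewrite ?mulr1 ?mulr0.
Qed.

Lemma ii_eq (i k : 'I_n) : (ii i == ii k) = (i == k).
Proof.
by rewrite (inj_eq (can_inj (@mxtens_indexK _ _))) xpair_eqE andbb -val_eqE.
Qed.

Lemma KmxE i p : Kmx C hnd i p = (p == ii i)%:R.
Proof.
rewrite summxE; under eq_bigr => k _ do rewrite outerE ketE ket2E conjC_nat.
by rewrite (eq_bigr (fun k => (k == i)%:R * (p == ii k)%:R)) ?sum_natr_eq_mull
  // => k _; rewrite eq_sym.
Qed.

Lemma PV_sym p q : PV C hnd p q = PV C hnd q p.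
Proof.
by rewrite !summxE; apply: eq_bigr => k _; rewrite !outerE !ket2E !conjC_nat mulrC.
Qed.

Lemma PV_iiE i p : PV C hnd (ii i) p = (p == ii i)%:R.
Proof.
rewrite summxE; under eq_bigr => k _ do rewrite outerE !ket2E ii_eq conjC_nat.
by rewrite (eq_bigr (fun k => (k == i)%:R * (p == ii k)%:R)) ?sum_natr_eq_mull
  // => k _; rewrite eq_sym.
Qed.

Lemma Kmx_conjE (X : 'M[C]_(d * d)) i j :
  (Kmx C hnd *m X *m adj (Kmx C hnd)) i j = X (ii i) (ii j).
Proof.
by apply: (mulmx_entry_delta X (k := ii i) (l := ii j)) => [k|l];
  rewrite ?adjE KmxE ?conjC_nat.
Qed.

Lemma PV_conjE (X : 'M[C]_(d * d)) i j :
  (PV C hnd *m X *m PV C hnd) (ii i) (ii j) = X (ii i) (ii j).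
Proof.
by apply: (mulmx_entry_delta X (k := ii i) (l := ii j)) => [k|l];
  rewrite ?[PV _ _ l _]PV_sym PV_iiE.
Qed.

Lemma phivecE (phi : 'I_n -> C) i : phivec hnd phi (ii i) 0 = phi i.
Proof.
rewrite summxE; under eq_bigr => k _ do rewrite mxE ket2E ii_eq eq_sym mulrC.
exact: sum_natr_eq_mull.
Qed.

Lemma ptrans_iiE (rho : 'M[C]_(d * d)) i j :
  ptrans rho (ii i) (ii j) = rho (mxtens_index (w i, w j)) (mxtens_index (w j, w i)).
Proof. by rewrite mxE !mxtens_indexK. Qed.

Definition sep_sum (s : seq ('cV[C]_d * 'cV[C]_d)) : 'M[C]_(d * d) :=
  \sum_(vw <- s) (vw.1 *m adj vw.1) *t (vw.2 *m adj vw.2).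

Lemma sep_sumE s a b c e :
  sep_sum s (mxtens_index (a, b)) (mxtens_index (c, e))
  = \sum_(vw <- s) vw.1 a 0 * (vw.1 c 0)^* * (vw.2 b 0 * (vw.2 e 0)^*).
Proof. by rewrite summxE; apply: eq_bigr => vw _; rewrite tensmxE !outerE. Qed.

Definition diag_coef (vw : 'cV[C]_d * 'cV[C]_d) i := vw.1 (w i) 0 * vw.2 (w i) 0.

Definition diag_coefC (vw : 'cV[C]_d * 'cV[C]_d) : 'cV[C]_n :=
  \col_i (vw.1 (w i) 0 * (vw.2 (w i) 0)^*).

Lemma sep_sum_iiE s i j :
  sep_sum s (ii i) (ii j) = \sum_(t <- s) diag_coef t i * (diag_coef t j)^*.
Proof.
by rewrite sep_sumE; apply: eq_bigr => vw _; rewrite /diag_coef rmorphM /=; ring.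
Qed.

Lemma diag_coef_gram s (phi : 'I_n -> C) (lam : C) :
  PV C hnd *m sep_sum s *m PV C hnd = lam *: (phivec hnd phi *m adj (phivec hnd phi)) ->
  forall i j, \sum_(t <- s) diag_coef t i * (diag_coef t j)^* = lam * phi i * (phi j)^*.
Proof.
move=> PsP i j; rewrite -sep_sum_iiE -(PV_conjE (sep_sum s)) PsP.
by rewrite mxE outerE !phivecE mulrA.
Qed.

Lemma ZGammaK_sep_sum s :
  ZGammaK hnd (sep_sum s) = \sum_(t <- s) diag_coefC t *m adj (diag_coefC t).
Proof.
apply/matrixP => i j; rewrite Kmx_conjE ptrans_iiE sep_sumE summxE.
by apply: eq_bigr => vw _; rewrite outerE !mxE rmorphM /= conjCK; ring.
Qed.

Lemma norm_diag_coefC vw i : `|diag_coefC vw i 0| = `|diag_coef vw i|.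
Proof. by rewrite mxE !normrM norm_conjC. Qed.

End Compression.

Theorem mainTheorem9 (C : numClosedFieldType) (n d : nat) (hnd : (n <= d)%N)
    (phi : 'I_n -> C) (rho : 'M[C]_(d * d)) :
  Fphi hnd phi rho -> separable rho ->
  R1 (Mplus (fun i => `|phi i| ^+ 2)) (ZGammaK hnd rho).
Proof.
move=> [_ [lam [_ PrhoP]]] [s rhoE]; subst rho; rewrite -/(sep_sum s) in PrhoP *.
rewrite ZGammaK_sep_sum; apply: R1_sum_outer => t ts.
have [c coef_t] := sum_outer_eq_outer_colinear (diag_coef_gram PrhoP) ts.
apply: (Mplus_outer (lam := `|c| ^+ 2)); first exact: realX (normr_real c).
by move=> i; rewrite norm_diag_coefC coef_t normrM exprMn.
Qed.
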